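(* Let $m\ge 2$ and let $Q_2$ be a bivariate quasi-copula. Then $Q^*(u):=Q_2(\min_{2\le i\le m}u_i,\,u_1)$, $u=(u_1,\dots,u_m)\in[0,1]^m$, is an $m$-variate quasi-copula, and its survival function satisfies $$\widehat{Q^*}(u_1,\dots,u_m)=\widehat{Q_2}\big(\max_{2\le i\le m}u_i,\,u_1\big)\quad\text{for all }(u_1,\dots,u_m)\in[0,1]^m.$$
   Context: An $m$-variate quasi-copula is $Q:[0,1]^m\to[0,1]$ that is grounded ($Q(u)=0$ whenever some $u_i=0$), has uniform marginals ($Q(1,\dots,1,u_i,1,\dots,1)=u_i$), is nondecreasing in each argument, and satisfies $|Q(v)-Q(u)|\le\sum_i|v_i-u_i|$. The survival function of an $m$-variate quasi-copula $Q$ is $\widehat{Q}(u)=\sum_{J\subseteq\{1,\dots,m\}}(-1)^{m-|J|}Q(y^J)$, where $y^J_i=1$ if $i\in J$ and $y^J_i=u_i$ otherwise (so for $m=2$, $\widehat{Q}(u_1,u_2)=1-u_1-u_2+Q(u_1,u_2)$). *)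

From HB Require Import structures.
From mathcomp Require Import all_boot all_order all_algebra.
From mathcomp Require Import reals.
Set Implicit Arguments. Unset Strict Implicit. Unset Printing Implicit Defensive.
Import Order.TTheory GRing.Theory Num.Theory.
Local Open Scope ring_scope.

(* Points of [0,1]^m are functions 'I_m -> R; coordinate u_{i+1} is u i
   (0-based indexing: u_1 of the paper is u ord0). *)

Definition in_cube (R : realType) (m : nat) (u : 'I_m -> R) : Prop :=
  forall i, 0 <= u i <= 1.

Definition marg_pt (R : realType) (m : nat) (i : 'I_m) (x : R) : 'I_m -> R :=
  fun j => if j == i then x else 1.

(* An m-variate quasi-copula: a function on [0,1]^m (values outside the cube
   are irrelevant) satisfying the axioms on the cube. *)
Definition quasi_copula (R : realType) (m : nat) (Q : ('I_m -> R) -> R) : Prop :=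
  [/\ (forall u, in_cube u -> 0 <= Q u <= 1),
      (forall u, in_cube u -> (exists i, u i = 0) -> Q u = 0),
      (forall i x, 0 <= x <= 1 -> Q (marg_pt i x) = x),
      (forall u v, in_cube u -> in_cube v -> (forall i, u i <= v i) -> Q u <= Q v)
    & (forall u v, in_cube u -> in_cube v ->
         `|Q v - Q u| <= \sum_(i < m) `|v i - u i|)].

Definition yJ (R : realType) (m : nat) (J : {set 'I_m}) (u : 'I_m -> R) : 'I_m -> R :=
  fun i => if i \in J then 1 else u i.

Definition survival (R : realType) (m : nat) (Q : ('I_m -> R) -> R) (u : 'I_m -> R) : R :=
  \sum_(J : {set 'I_m}) (-1) ^+ (m - #|J|)%N * Q (yJ J u).

Definition pt2 (R : realType) (a b : R) : 'I_2 -> R :=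
  fun j => if j == ord0 then a else b.

(* min / max over the coordinates i >= 2 (paper indexing), i.e. all 0-based
   indices i <> 0.  For m >= 2 this index set is nonempty and all values lie in
   [0,1], so the neutral elements 1 (for min) and 0 (for max) are harmless. *)
Definition min_tail (R : realType) (m : nat) (u : 'I_m -> R) : R :=
  \big[Num.min/1]_(i : 'I_m | (i != 0 :> nat)) u i.
Definition max_tail (R : realType) (m : nat) (u : 'I_m -> R) : R :=
  \big[Num.max/0]_(i : 'I_m | (i != 0 :> nat)) u i.

(* u_1 of the paper (0-based index 0); default 0 if m = 0 (never used). *)
Definition first_coord (R : realType) (m : nat) (u : 'I_m -> R) : R :=
  match m return ('I_m -> R) -> R with
  | 0 => fun _ => 0
  | k.+1 => fun u => u ord0
  end u.

Definition Qstar (R : realType) (m : nat) (Q2 : ('I_2 -> R) -> R)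
  : ('I_m -> R) -> R :=
  fun u => Q2 (pt2 (min_tail u) (first_coord u)).

From mathcomp Require Import all_boot all_order all_algebra reals ring lra.
From Stdlib Require Import FunctionalExtensionality.
Import Order.TTheory GRing.Theory Num.Theory.
Local Open Scope ring_scope.

Set Implicit Arguments. Unset Strict Implicit. Unset Printing Implicit Defensive.

(* Q^* is Q_2 composed with u |-> (min_{i>=2} u_i, u_1), a monotone map that is
   1-Lipschitz for the l^1 distance and sends the margins of [0,1]^m to those of
   [0,1]^2, so the quasi-copula axioms transfer.  For the survival function, fix
   a tail index k with u_k = max_{i>=2} u_i and pair each J not containing k
   with J + {k} in the alternating sum.  Raising the k-th coordinate to 1 leaves
   the tail minimum unchanged as soon as another tail coordinate u_i <= u_k is
   kept, so a pair cancels unless J contains every tail index but k.  The two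
   surviving pairs, J = ~{k} and J = ~{k, 1}, are exactly the four terms of the
   bivariate survival function of Q_2 at (u_k, u_1). *)

Section SetPairing.
Variables (T : finType) (V : Type) (idx : V) (op : Monoid.com_law idx).

Lemma big_set_pair (k : T) (F : {set T} -> V) :
  \big[op/idx]_(J : {set T}) F J =
  \big[op/idx]_(J : {set T} | k \notin J) op (F J) (F (k |: J)).
Proof.
rewrite (bigID (fun J : {set T} => k \notin J) xpredT) big_split /=; congr (op _ _).
rewrite (reindex_onto (fun J => k |: J) (fun J => J :\ k)) /=; last first.
  by move=> J; rewrite negbK => /setD1K.
apply: eq_bigl => J; rewrite setU11 /=.
by apply/eqP/idP => [<-|kJ]; [rewrite setD11 | rewrite setU1K].
Qed.

Lemma big_support2 (I : finType) (P : pred I) (F : I -> V) (a b : I) :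
  a != b -> P a -> P b -> (forall i, P i -> i != a -> i != b -> F i = idx) ->
  \big[op/idx]_(i | P i) F i = op (F a) (F b).
Proof.
move=> ab Pa Pb F0; rewrite (bigD1 a) // (bigD1 b) /=; last by rewrite Pb eq_sym.
rewrite big1 ?Monoid.mulm1 // => i /andP[/andP[Pi ia] ib]; exact: F0.
Qed.

End SetPairing.

Lemma subset_setD1_cases (T : finType) (A J : {set T}) (a : T) :
  A :\ a \subset J -> J \subset A -> J = A :\ a \/ J = A.
Proof.
move=> AaJ JA; case: (boolP (a \in J)) => aJ.
  right; apply/eqP; rewrite eqEsubset JA /=; apply/subsetP => x xA.
  by case: (eqVneq x a) => [-> //|xa]; apply: (subsetP AaJ); rewrite !inE xa.
by left; apply/eqP; rewrite eqEsubset subsetD1 JA aJ AaJ.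
Qed.

Section QuasiCopulaStar.
Variable R : realType.

Lemma survival_pairing m (Q : ('I_m -> R) -> R) (u : 'I_m -> R) (k : 'I_m) :
  survival Q u =
  \sum_(J : {set 'I_m} | k \notin J)
    (-1) ^+ (m - #|J|) * (Q (yJ J u) - Q (yJ (k |: J) u)).
Proof.
rewrite /survival (big_set_pair _ k); apply: eq_bigr => J kJ.
have : J \proper [set: 'I_m] by rewrite properT; apply: contraNneq kJ => ->.
move/proper_card; rewrite cardsT card_ord => ltJm.
by rewrite cardsU1 kJ add1n -(subnSK ltJm) exprS /=; ring.
Qed.

Lemma ord2_cases (j : 'I_2) : j = ord0 \/ j = ord_max.
Proof. by case: j => [[|[|//]] p]; [left | right]; apply: val_inj. Qed.

Lemma yJ_pt2 (J : {set 'I_2}) (a b : R) :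
  yJ J (pt2 a b) =
  pt2 (if ord0 \in J then 1 else a) (if ord_max \in J then 1 else b).
Proof. by apply: functional_extensionality => j; case: (ord2_cases j) => ->. Qed.

Lemma survival_pt2 (Q : ('I_2 -> R) -> R) (a b : R) :
  survival Q (pt2 a b) = Q (pt2 1 1) - Q (pt2 a 1) - Q (pt2 1 b) + Q (pt2 a b).
Proof.
rewrite (survival_pairing _ _ ord_max).
rewrite (big_support2 _ (a := set0) (b := [set ord0])).
- by rewrite /= !yJ_pt2 cards0 cards1 !inE subn0 subn1 /=; ring.
- by apply/eqP => /setP /(_ ord0); rewrite !inE.
- by rewrite inE.
- by rewrite inE.
move=> J notJ J0 J1.
suff : J \subset [set ord0] by rewrite subset1 (negbTE J0) (negbTE J1).
apply/subsetP => x; case: (ord2_cases x) => ->; first by rewrite inE.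
by rewrite (negbTE notJ).
Qed.

Lemma ler_dist_min (x1 y1 x2 y2 : R) :
  `|Num.min x1 y1 - Num.min x2 y2| <= `|x1 - x2| + `|y1 - y2|.
Proof.
have := ler_norm (x1 - x2); have := ler_norm (y1 - y2).
have : - (x1 - x2) <= `|x1 - x2| by rewrite -normrN ler_norm.
have : - (y1 - y2) <= `|y1 - y2| by rewrite -normrN ler_norm.
rewrite ler_norml; case: (leP x1 y1) => ?; case: (leP x2 y2) => ? *;
  apply/andP; split; lra.
Qed.

Section MinTail.
Variable m : nat.
Implicit Types u v : 'I_m -> R.

Lemma min_tail_le u (i : 'I_m) : (i != 0 :> nat) -> min_tail u <= u i.
Proof. by move=> i0; rewrite /min_tail; exact: bigmin_le_cond. Qed.

Lemma min_tail_le1 u : min_tail u <= 1.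
Proof. exact: bigmin_le_id. Qed.

Lemma min_tail_ge0 u : in_cube u -> 0 <= min_tail u.
Proof. by move=> hu; apply: le_bigmin => // i _; case/andP: (hu i). Qed.

Lemma le_min_tail u v : (forall i, u i <= v i) -> min_tail u <= min_tail v.
Proof. by move=> uv; apply: le_bigmin2 => i _. Qed.

Lemma min_tail_lipschitz u v :
  `|min_tail v - min_tail u| <= \sum_(i : 'I_m | (i != 0 :> nat)) `|v i - u i|.
Proof.
apply: (big_ind3 (fun a b c => `|a - b| <= c)) => //; first by rewrite subrr normr0.
by move=> a b c a' b' c' ? ?; apply: le_trans (ler_dist_min _ _ _ _) _; apply: lerD.
Qed.

Lemma min_tail_marg_pt (i : 'I_m) (x : R) :
  x <= 1 -> min_tail (marg_pt i x) = if (i != 0 :> nat) then x else 1.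
Proof.
move=> x1; case: ifPn => i0.
  rewrite /min_tail (bigminD1 i) // {1}/marg_pt eqxx bigmin_eq_id ?min_l //.
  by move=> j /andP[_ /negbTE ji]; rewrite /marg_pt ji.
apply: bigmin_eq_id => j j0; rewrite /marg_pt; case: eqP => // ji.
by move: i0; rewrite -ji j0.
Qed.

End MinTail.

Lemma marg_pt_ord0 (x : R) : marg_pt ord0 x = pt2 x 1.
Proof. by apply: functional_extensionality => j; case: (ord2_cases j) => ->. Qed.

Lemma marg_pt_ord_max (x : R) : marg_pt ord_max x = pt2 1 x.
Proof. by apply: functional_extensionality => j; case: (ord2_cases j) => ->. Qed.

Section Qstar.
Variables (n : nat) (Q2 : ('I_2 -> R) -> R).
Implicit Types u v : 'I_n.+2 -> R.

Lemma Qstar_arg_in_cube u : in_cube u -> in_cube (pt2 (min_tail u) (u ord0)).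
Proof.
move=> hu j; rewrite /pt2; case: ifP => _; last exact: hu.
by rewrite min_tail_ge0 ?min_tail_le1.
Qed.

Lemma quasi_copula_Qstar : quasi_copula Q2 -> quasi_copula (Qstar (m := n.+2) Q2).
Proof.
case=> Q2_bound Q2_ground Q2_marg Q2_mono Q2_lip.
rewrite /Qstar /first_coord /=; split.
- by move=> u hu; apply/Q2_bound/Qstar_arg_in_cube.
- move=> u hu [i ui0]; apply: Q2_ground; first exact: Qstar_arg_in_cube.
  have [i0 | i0] := eqVneq i ord0; first by exists ord_max; rewrite /pt2 /= -ui0 i0.
  exists ord0; rewrite /pt2 /=; apply/eqP.
  by rewrite eq_le min_tail_ge0 // andbT -ui0 min_tail_le.
- move=> i x x01; case/andP: (x01) => _ x1; rewrite min_tail_marg_pt //.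
  have [-> | i0] := eqVneq i ord0.
    by rewrite /= {1}/marg_pt eqxx -marg_pt_ord_max Q2_marg.
  by rewrite i0 {1}/marg_pt eq_sym (negbTE i0) -marg_pt_ord0 Q2_marg.
- move=> u v hu hv uv; apply: Q2_mono; try exact: Qstar_arg_in_cube.
  by move=> j; rewrite /pt2; case: ifP => _; [apply: le_min_tail | apply: uv].
- move=> u v hu hv.
  apply: le_trans (Q2_lip _ _ (Qstar_arg_in_cube hu) (Qstar_arg_in_cube hv)) _.
  rewrite big_ord_recl big_ord1 /pt2 /= [leRHS](bigD1 ord0) //= addrC lerD2r.
  exact: min_tail_lipschitz.
Qed.

Lemma Qstar_yJ_pair u (k : 'I_n.+2) (J : {set 'I_n.+2}) :
  in_cube u -> k != ord0 -> (forall i, i != ord0 -> u i <= u k) -> k \notin J ->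
  Qstar Q2 (yJ J u) - Qstar Q2 (yJ (k |: J) u) =
  if [set~ k] :\ ord0 \subset J
  then Q2 (pt2 (u k) (yJ J u ord0)) - Q2 (pt2 1 (yJ J u ord0)) else 0.
Proof.
move=> hu k0 kmax kJ; rewrite /Qstar /first_coord /=.
have -> : yJ (k |: J) u ord0 = yJ J u ord0.
  by rewrite /yJ in_setU1 eq_sym (negbTE k0).
set r := \big[Num.min/1]_(i : 'I_n.+2 | (i != 0 :> nat) && (i != k)) yJ J u i.
have -> : min_tail (yJ J u) = Num.min (u k) r.
  by rewrite /min_tail (bigminD1 k) // {1}/yJ (negbTE kJ).
have -> : min_tail (yJ (k |: J) u) = r.
  rewrite /min_tail (bigminD1 k) // {1}/yJ setU11 min_r ?bigmin_le_id //.
  by apply: eq_bigr => i /andP[_ ik]; rewrite /yJ in_setU1 (negbTE ik).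
case: ifPn => [sub | /subsetPn[i iA iJ]].
  have -> : r = 1.
    apply: bigmin_eq_id => i /andP[i0 ik].
    by rewrite /yJ (subsetP sub) // !inE ik i0.
  by rewrite min_l //; case/andP: (hu k).
have rk : r <= u k.
  move: iA; rewrite !inE => /andP[i0 ik].
  apply: (bigmin_inf i); first by rewrite i0 ik.
  by rewrite /yJ (negbTE iJ) kmax.
by rewrite min_r // subrr.
Qed.

Lemma max_tail_attained u : in_cube u ->
  exists2 k : 'I_n.+2, k != ord0 & max_tail u = u k.
Proof.
move=> hu; pose tail := fun i : 'I_n.+2 => i != 0 :> nat.
have u_ge0 i : tail i -> 0 <= u i by move=> _; case/andP: (hu i).
by have [k k0 uk] := @eq_bigmax _ R _ 0 ord_max tail u isT u_ge0; exists k.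
Qed.

Lemma survival_Qstar u : in_cube u ->
  survival (Qstar Q2) u = survival Q2 (pt2 (max_tail u) (first_coord u)).
Proof.
move=> hu; have [k k0 uk] := max_tail_attained hu.
have kmax i : i != ord0 -> u i <= u k by move=> i0; rewrite -uk le_bigmax_cond.
rewrite survival_pt2 uk (survival_pairing _ _ k).
under eq_bigr => J kJ do rewrite Qstar_yJ_pair //.
have ord0_k : ord0 \in [set~ k] by rewrite !inE eq_sym.
rewrite (big_support2 _ (a := [set~ k]) (b := [set~ k] :\ ord0)) /=.
- rewrite subD1set subxx /yJ ord0_k !inE eqxx /=.
  have card_k : #|[set~ k]| = n.+1 by rewrite cardsC1 card_ord.
  have card_k0 : #|[set~ k] :\ ord0| = n.
    by have := cardsD1 ord0 [set~ k]; rewrite ord0_k card_k add1n => /succn_inj.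
  rewrite card_k card_k0 subSnn -addn2 addKn; ring.
- by apply/eqP => /setP /(_ ord0); rewrite ord0_k !inE eqxx.
- by rewrite !inE eqxx.
- by rewrite !inE eqxx andbF.
move=> J kJ JnA JnA0; case: ifPn => [sub|_]; last by rewrite mulr0.
have JA : J \subset [set~ k] by rewrite subsetC sub1set inE.
by case: (subset_setD1_cases sub JA) => /eqP; rewrite ?(negbTE JnA) ?(negbTE JnA0).
Qed.

End Qstar.

End QuasiCopulaStar.

Theorem mainTheorem3 (R : realType) (m : nat) (Q2 : ('I_2 -> R) -> R) :
  (2 <= m)%N ->
  quasi_copula Q2 ->
  quasi_copula (Qstar (m:=m) Q2) /\
  (forall u : 'I_m -> R, in_cube u ->
     survival (Qstar (m:=m) Q2) u =
     survival Q2 (pt2 (max_tail u) (first_coord u))).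
Proof.
case: m => [|[|n]] // _ Q2qc.
by split; [exact: quasi_copula_Qstar | exact: survival_Qstar].
Qed.
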